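(* Let $P$ and $Q$ be finite posets with height functions $g$ and $h$ respectively. Give $P\times Q$ (product order) the height function $(a,b)\mapsto g(a)+h(b)$, and the disjoint union $P\sqcup Q$ the height function $g\sqcup h$ equal to $g$ on $P$ and $h$ on $Q$. Then $\mathsf{Z}_{P\times Q,g+h}=\mathsf{Z}_{P,g}\,\mathsf{Z}_{Q,h}$ and $\mathsf{Z}_{P\sqcup Q,g\sqcup h}=\mathsf{Z}_{P,g}+\mathsf{Z}_{Q,h}$.
   Context: $q$ is an indeterminate; $[n]_q=(q^n-1)/(q-1)$. A height function on a finite poset $R$ is $h:R\to\mathbb{N}$ with $h(x)<h(y)$ whenever $y$ covers $x$. The $q$-Zeta polynomial $\mathsf{Z}_{R,h}\in\mathbb{Q}(q)[x]$ is the unique polynomial with $\mathsf{Z}_{R,h}([n]_q)=\sum_{e_1\le\cdots\le e_{n-1}\text{ in }R}q^{h(e_1)+\cdots+h(e_{n-1})}$ for all integers $n\ge2$ (such a polynomial exists). *)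

From HB Require Import structures.
From mathcomp Require Import all_boot all_order all_algebra fraction.
Set Implicit Arguments. Unset Strict Implicit. Unset Printing Implicit Defensive.
Import Order.TTheory GRing.Theory.
Local Open Scope ring_scope.

Notation Qq := {fraction {poly rat}}.
Definition qvar : Qq := FracField.tofrac ('X : {poly rat}).

Definition qint (n : nat) : Qq := (qvar ^+ n - 1) / (qvar - 1).

Definition covers d (T : porderType d) (x y : T) : Prop :=
  (x < y)%O /\ ~ (exists z : T, (x < z)%O /\ (z < y)%O).

Definition is_height d (T : porderType d) (h : T -> nat) : Prop :=
  forall x y : T, covers x y -> (h x < h y)%N.

Definition multichain_sum (T : finType) (le : rel T) (h : T -> nat) (n : nat) : Qq :=
  \sum_(t : (n.-1).-tuple T | sorted le t) qvar ^+ (\sum_(e <- t) h e)%N.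

(* Z is the q-Zeta polynomial of (T, le, h):
   Z([n]_q) = multichain sum for all integers n >= 2 (this determines Z uniquely). *)
Definition is_qZeta (T : finType) (le : rel T) (h : T -> nat) (Z : {poly Qq}) : Prop :=
  forall n : nat, (2 <= n)%N -> Z.[qint n] = multichain_sum le h n.

Definition prod_le d1 d2 (P : porderType d1) (Q : porderType d2) : rel (P * Q) :=
  fun x y => (x.1 <= y.1)%O && (x.2 <= y.2)%O.

Definition sum_le d1 d2 (P : porderType d1) (Q : porderType d2) : rel (P + Q) :=
  fun x y => match x, y with
             | inl a, inl b => (a <= b)%O
             | inr a, inr b => (a <= b)%O
             | _, _ => false
             end.

Definition sum_height (P Q : Type) (g : P -> nat) (h : Q -> nat) : P + Q -> nat :=
  fun x => match x with inl a => g a | inr b => h b end.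

From mathcomp Require Import all_boot all_order all_algebra fraction.
Import GRing.Theory.
Local Open Scope ring_scope.

(* A multichain of length m in P × Q is exactly a pair of multichains of
   length m in P and in Q, zipped together, and its weight is the sum of
   their weights; so the multichain sums of P × Q factor.  A nonempty
   multichain in P ⊔ Q never leaves the summand of its first element, so for
   n >= 2 the multichain sums of P ⊔ Q are the sums of those of P and Q.
   Evaluating Z_P Z_Q and Z_P + Z_Q at [n]_q then gives the claim. *)

Lemma reindex_map_tuple {R : Type} {idx : R} (op : Monoid.com_law idx)
    {T U : finType} (f : T -> U) (f' : U -> option T) {m : nat}
    {P : pred (m.-tuple U)} {F : m.-tuple U -> R} :
  pcancel f f' -> (forall t, P t -> t = map f (pmap f' t) :> seq U) ->
  \big[op/idx]_(t | P t) F t =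
    \big[op/idx]_(u | P (map_tuple f u)) F (map_tuple f u).
Proof.
move=> fK Pmap; rewrite (reindex_omap (map_tuple f) (fun t => insub (pmap f' t))).
  by apply: eq_bigl => u; rewrite /= (map_pK fK) (valK u) eqxx andbT.
move=> t /Pmap t_map; case: insubP => [u _ u_val | ]; last first.
  by case/negP; rewrite -(size_map f) -t_map size_tuple.
by congr Some; apply: val_inj; rewrite /= u_val -t_map.
Qed.

Section ProductOrder.

Variables (T1 T2 : finType) (r1 : rel T1) (r2 : rel T2).
Variables (w1 : T1 -> nat) (w2 : T2 -> nat).

Definition prod_rel : rel (T1 * T2) := fun x y => r1 x.1 y.1 && r2 x.2 y.2.

Lemma path_zip x y s t : size s = size t ->
  path prod_rel (x, y) (zip s t) = path r1 x s && path r2 y t.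
Proof.
elim: s t x y => [|a s IHs] [|b t] x y //= [size_st].
by rewrite IHs // andbACA.
Qed.

Lemma sorted_zip s t : size s = size t ->
  sorted prod_rel (zip s t) = sorted r1 s && sorted r2 t.
Proof. by case: s t => [|a s] [|b t] //= [/path_zip]. Qed.

Lemma weight_zip s t : size s = size t ->
  (\sum_(e <- zip s t) (w1 e.1 + w2 e.2) =
     \sum_(a <- s) w1 a + \sum_(b <- t) w2 b)%N.
Proof.
move=> size_st; rewrite big_split /=.
rewrite -(big_map fst xpredT w1) -(big_map snd xpredT w2) -/(unzip1 _) -/(unzip2 _).
by rewrite unzip1_zip ?unzip2_zip ?size_st.
Qed.

Lemma multichain_sum_prod n :
  multichain_sum prod_rel (fun x => w1 x.1 + w2 x.2)%N n =
    multichain_sum r1 w1 n * multichain_sum r2 w2 n.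
Proof.
rewrite /multichain_sum big_distrlr pair_big /=.
rewrite (reindex (fun st : _ * _ => zip_tuple st.1 st.2)) /=.
  apply: eq_big => [[s t]|[s t] _] /=.
    by rewrite sorted_zip // !size_tuple.
  by rewrite weight_zip ?size_tuple // exprD.
exists (fun u => (map_tuple fst u, map_tuple snd u)) => [[s t] _ | u _].
  congr pair; apply: val_inj; [apply: unzip1_zip | apply: unzip2_zip];
  by rewrite !size_tuple.
by apply: val_inj; apply: zip_unzip.
Qed.

End ProductOrder.

Section DisjointUnion.

Variables (T1 T2 : finType) (r1 : rel T1) (r2 : rel T2).
Variables (w1 : T1 -> nat) (w2 : T2 -> nat).

Definition sum_rel : rel (T1 + T2) := fun x y =>
  match x, y with
  | inl a, inl b => r1 a b
  | inr a, inr b => r2 a b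
  | _, _ => false
  end.

Definition getl (x : T1 + T2) : option T1 := if x is inl a then Some a else None.
Definition getr (x : T1 + T2) : option T2 := if x is inr b then Some b else None.

Lemma path_sum_rel_inl a s : path sum_rel (inl a) s -> s = map inl (pmap getl s).
Proof. by elim: s a => [|[b|b] s IHs] a //= /andP[_ /IHs <-]. Qed.

Lemma path_sum_rel_inr b s : path sum_rel (inr b) s -> s = map inr (pmap getr s).
Proof. by elim: s b => [|[a|a] s IHs] b //= /andP[_ /IHs <-]. Qed.

Lemma multichain_sum_sum n : (1 < n)%N ->
  multichain_sum sum_rel (sum_height w1 w2) n =
    multichain_sum r1 w1 n + multichain_sum r2 w2 n.
Proof.
case: n => [|[|k]] // _; rewrite /multichain_sum /=.
rewrite (bigID (fun t => isSome (getl (thead t)))) /=.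
have thead_map (T : finType) (f : T -> T1 + T2) (u : k.+1.-tuple T) :
    thead (map_tuple f u) = f (thead u) by rewrite /thead tnth_map.
congr (_ + _).
  rewrite (reindex_map_tuple _ (@inl T1 T2) getl) //.
    apply: eq_big => [u|u _]; first by rewrite thead_map andbT sorted_map.
    by rewrite big_map.
  by case/tupleP => [[a|b] t] /=; rewrite ?andbT ?andbF // => /path_sum_rel_inl <-.
rewrite (reindex_map_tuple _ (@inr T1 T2) getr) //.
  apply: eq_big => [u|u _]; first by rewrite thead_map andbT sorted_map.
  by rewrite big_map.
by case/tupleP => [[a|b] t] /=; rewrite ?andbT ?andbF // => /path_sum_rel_inr <-.
Qed.

End DisjointUnion.

Theorem mainTheorem11 (d1 d2 : Order.disp_t) (P : finPOrderType d1) (Q : finPOrderType d2)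
  (g : P -> nat) (h : Q -> nat) (ZP ZQ : {poly Qq}) :
  is_height g -> is_height h ->
  is_qZeta (<=%O : rel P) g ZP -> is_qZeta (<=%O : rel Q) h ZQ ->
  is_qZeta (@prod_le _ _ P Q) (fun x => (g x.1 + h x.2)%N) (ZP * ZQ) /\
  is_qZeta (@sum_le _ _ P Q) (sum_height g h) (ZP + ZQ).
Proof.
move=> _ _ ZP_eval ZQ_eval; split=> n n_ge2.
  by rewrite hornerM ZP_eval // ZQ_eval // -multichain_sum_prod.
by rewrite hornerD ZP_eval // ZQ_eval // -multichain_sum_sum.
Qed.
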